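(* As formal power series in $t$, $$\sum_{n\ge0}R_{1,n}t^n=R_{1,0}\,\frac{Z^{(G_r)}(0,-ty_2,-ty_3,\dots,-ty_{2r+1})}{Z^{(G_r)}(-ty_1,-ty_2,\dots,-ty_{2r+1})},$$ with $y_{2\alpha-1}=\frac{R_{\alpha-1,0}R_{\alpha,1}}{R_{\alpha,0}R_{\alpha-1,1}}$ ($1\le\alpha\le r+1$) and $y_{2\alpha}=\frac{R_{\alpha-1,0}R_{\alpha+1,1}}{R_{\alpha,0}R_{\alpha,1}}$ ($1\le\alpha\le r$).
   Context: Fix $r\ge1$, $I_r=\{1,\dots,r\}$. Let $R_{1,0},\dots,R_{r,0},R_{1,1},\dots,R_{r,1}$ be algebraically independent indeterminates over $\mathbb Q$ and $(R_{\alpha,n})_{0\le\alpha\le r+1,n\in\mathbb Z}$ the $A_r$ $Q$-system: the unique family of nonzero elements of $\mathbb Q(R_{1,0},\dots,R_{r,1})$ with these initial values, $R_{0,n}=R_{r+1,n}=1$, and $R_{\alpha,n+1}R_{\alpha,n-1}=R_{\alpha,n}^2+R_{\alpha+1,n}R_{\alpha-1,n}$ ($\alpha\in I_r$, $n\in\mathbb Z$). The graph $G_r$ has vertices $1,\dots,2r+1$ and edges $\{1,2\}$, $\{2k,2k+1\}$ ($1\le k\le r$), $\{2k-2,2k\}$ and $\{2k-1,2k\}$ ($2\le k\le r$). A hard particle configuration is a set of vertices no two of which are adjacent; with vertex weights $z_1,\dots,z_{2r+1}$, $Z^{(G_r)}(z_1,\dots,z_{2r+1})=\sum_C\prod_{i\in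 C}z_i$, summed over all hard particle configurations $C$ on $G_r$ (including the empty one). *)

From HB Require Import structures.
From mathcomp Require Import all_boot all_order all_algebra.
Set Implicit Arguments. Unset Strict Implicit. Unset Printing Implicit Defensive.
Import Order.TTheory GRing.Theory Num.Theory.
Local Open Scope ring_scope.

(* mpoly k = rat[x_0,...,x_{k-1}], built as nested univariate polynomials. *)
Fixpoint mpoly (k : nat) : idomainType :=
  if k is k'.+1 then ({poly mpoly k'} : idomainType) else rat.

Fixpoint mvar (k : nat) : nat -> mpoly k :=
  match k return nat -> mpoly k with
  | 0 => fun _ => 0
  | k'.+1 => fun i => if i is i'.+1 then (mvar k' i')%:P else 'X
  end.

Definition QField (r : nat) : fieldType := {fraction (mpoly (2 * r))}.

(* Initial values: R_{a,0} = x_{a-1}, R_{a,1} = x_{r+a-1}  (1 <= a <= r);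
   R_{0,n} = R_{r+1,n} = 1. *)
Definition Qinit0 (r : nat) (a : nat) : QField r :=
  if (1 <= a <= r)%N then (@FracField.tofrac (mpoly (2 * r)) (mvar (2 * r) a.-1)) else 1.
Definition Qinit1 (r : nat) (a : nat) : QField r :=
  if (1 <= a <= r)%N then (@FracField.tofrac (mpoly (2 * r)) (mvar (2 * r) (r + a.-1))) else 1.

(* Qpair r n = (R_{.,n}, R_{.,n+1}), using
   R_{a,n+1} = (R_{a,n}^2 + R_{a+1,n} R_{a-1,n}) / R_{a,n-1}. *)
Fixpoint Qpair (r : nat) (n : nat) : (nat -> QField r) * (nat -> QField r) :=
  match n with
  | 0 => (Qinit0 r, Qinit1 r)
  | n'.+1 =>
      let: (A, B) := Qpair r n' in
      (B, fun a => if (1 <= a <= r)%N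
                   then (B a ^+ 2 + B a.+1 * B a.-1) / A a else 1)
  end.

(* R_{a,n} for n >= 0 (the A_r Q-system). *)
Definition Qsys (r : nat) (a n : nat) : QField r := (Qpair r n).1 a.

(* Vertex v (1 <= v <= 2r+1) of the paper is i : 'I_(2r+1) with v = i+1. *)
Definition Gedge0 (r : nat) (u v : nat) : bool :=
  [|| (u == 1) && (v == 2),
      [exists k : 'I_r.+1, [&& (1 <= k)%N, (u == 2 * k)%N & (v == (2 * k).+1)%N]],
      [exists k : 'I_r.+1, [&& (2 <= k)%N, (u == 2 * k - 2)%N & (v == 2 * k)%N]]
    | [exists k : 'I_r.+1, [&& (2 <= k)%N, (u == 2 * k - 1)%N & (v == 2 * k)%N]]].

Definition Gadj (r : nat) (i j : 'I_(2 * r + 1)) : bool :=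
  Gedge0 r i.+1 j.+1 || Gedge0 r j.+1 i.+1.

Definition hard_particle (r : nat) (C : {set 'I_(2 * r + 1)}) : bool :=
  [forall i in C, forall j in C, ~~ Gadj i j].

(* Z^{(G_r)}(z_1,...,z_{2r+1}), with z_v = z (v-1). *)
Definition ZG (r : nat) (T : comNzRingType) (z : 'I_(2 * r + 1) -> T) : T :=
  \sum_(C : {set 'I_(2 * r + 1)} | hard_particle C) \prod_(i in C) z i.

Definition fps (K : fieldType) := nat -> K.

Definition fps_of_poly (K : fieldType) (p : {poly K}) : fps K := fun n => p`_n.

Definition fps_mul (K : fieldType) (a b : fps K) : fps K :=
  fun n => \sum_(i < n.+1) a i * b (n - i)%N.

Definition fps_scale (K : fieldType) (c : K) (a : fps K) : fps K :=
  fun n => c * a n.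

Fixpoint fps_inv_upto (K : fieldType) (a : fps K) (n : nat) : seq K :=
  match n with
  | 0 => [:: (a 0%N)^-1]
  | n'.+1 =>
      let s := fps_inv_upto a n' in
      rcons s (- (a 0%N)^-1 * \sum_(k < n'.+1) a k.+1 * nth 0 s (n' - k)%N)
  end.

Definition fps_inv (K : fieldType) (a : fps K) : fps K :=
  fun n => nth 0 (fps_inv_upto a n) n.

(* y_v = yw r (v-1):  y_{2a-1} = R_{a-1,0}R_{a,1}/(R_{a,0}R_{a-1,1}),
                      y_{2a}   = R_{a-1,0}R_{a+1,1}/(R_{a,0}R_{a,1}). *)
Definition yw (r : nat) (i : nat) : QField r :=
  if ~~ odd i then
    let a := (i./2).+1 in
    Qsys r a.-1 0 * Qsys r a 1 / (Qsys r a 0 * Qsys r a.-1 1)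
  else
    let a := (i./2).+1 in
    Qsys r a.-1 0 * Qsys r a.+1 1 / (Qsys r a 0 * Qsys r a 1).

(* A pair of consecutive rows (R_{.,n}, R_{.,n+1}) is a seed s; one step of the
   Q-system is the mutation s -> mutate s, and the weights y of the theorem are
   functions yseed s of the seed.  Let D(s) = Z(-t y_1, ..., -t y_{2r+1}) and
   N(s) = Z(0, -t y_2, ..., -t y_{2r+1}).  The proof rests on two facts:
     (1) D (mutate s) = D s, and
     (2) N s - D s = y_1(s) t N (mutate s), where y_1(s) = R_{1,n+1} / R_{1,n};
   an induction on n then gives R_{1,n} = R_{1,0} [t^n] (N / D).
   Both facts follow from the transfer recursion satisfied by the partition
   functions of the subgraphs of G_r induced on the vertices >= j, and from a
   comparison lemma for two solutions of that recursion whose weights obey a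
   sum rule and a product rule on each pair of vertices {2k, 2k+1}; for the
   weights before and after a mutation these rules are rational identities
   implied by the Q-system relation.  All divisions are legitimate because the
   Q-system is subtraction free: each R_{a,n} specializes to a positive
   rational number when all initial values are set to 1, so it is nonzero. *)

From HB Require Import structures.
From mathcomp Require Import all_boot all_order all_algebra.
From mathcomp Require Import ring zify.
Import Order.TTheory GRing.Theory Num.Theory.
Local Open Scope ring_scope.

Set Implicit Arguments. Unset Strict Implicit. Unset Printing Implicit Defensive.

Section PowerSeries.
Variable K : fieldType.

Definition fps_ratio (N D : {poly K}) : fps K :=
  fps_mul (fps_of_poly N) (fps_inv (fps_of_poly D)).

Lemma size_fps_inv_upto (a : fps K) n : size (fps_inv_upto a n) = n.+1.
Proof. by elim: n => [|n IH] //=; rewrite size_rcons IH. Qed.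

Lemma nth_fps_inv_upto (a : fps K) n m : (m <= n)%N ->
  nth 0 (fps_inv_upto a n) m = fps_inv a m.
Proof.
elim: n => [|n IH]; first by rewrite leqn0 => /eqP ->.
rewrite leq_eqVlt => /orP [/eqP -> //|lt_mn].
by rewrite /= nth_rcons size_fps_inv_upto lt_mn IH.
Qed.

Lemma fps_invS (a : fps K) n : fps_inv a n.+1 =
  - (a 0%N)^-1 * \sum_(k < n.+1) a k.+1 * fps_inv a (n - k)%N.
Proof.
rewrite /fps_inv /= nth_rcons size_fps_inv_upto ltnn eqxx; congr (_ * _).
by apply: eq_bigr => k _; rewrite nth_fps_inv_upto // leq_subr.
Qed.

Lemma fps_mul_invS (a : fps K) n : a 0%N != 0 -> fps_mul a (fps_inv a) n.+1 = 0.
Proof.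
move=> a0; rewrite /fps_mul big_ord_recl subn0 fps_invS.
by rewrite mulrA mulrN mulfV // mulN1r addNr.
Qed.

Lemma fps_ratio_shift (N D N' : {poly K}) (c : K) m :
  D`_0 != 0 -> N - D = c%:P * 'X * N' -> fps_ratio N D m.+1 = c * fps_ratio N' D m.
Proof.
move=> D0 eND.
have coefND i : N`_i - D`_i = if i is i'.+1 then c * N'`_i' else 0.
  by rewrite -coefB eND -mulrA coefCM coefXM; case: i => [|i]; rewrite ?mulr0.
rewrite /fps_ratio -[LHS]subr0 -(fps_mul_invS m D0) /fps_mul -sumrB big_ord_recl mulr_sumr.
rewrite -mulrBl coefND mul0r add0r.
by apply: eq_bigr => i _; rewrite -mulrBl coefND mulrA.
Qed.

Lemma fps_ratio0 (N D : {poly K}) : fps_ratio N D 0 = N`_0 / D`_0.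
Proof. by rewrite /fps_ratio /fps_mul big_ord1. Qed.

End PowerSeries.

(* In 0-based numbering, vertex j of G_r is adjacent to j+1 and, when j is odd,
   also to j+2; [hop j] is the first larger vertex that is not adjacent to j. *)
Definition hop (j : nat) : nat := if odd j then 3 else 2.

Lemma Gedge0E r u v : (0 < u)%N -> (v <= 2 * r + 1)%N ->
  Gedge0 r u v = (v == u.+1) || ((v == u.+2) && ~~ odd u).
Proof.
move=> u_gt0 v_le; apply/idP/idP.
- case/or4P => [/andP [/eqP -> /eqP ->] //| | |];
    case/existsP => k /and3P [k_ge /eqP -> /eqP ->]; first by rewrite eqxx.
  + have -> : (2 * k - 2 = 2 * (k - 1))%N by lia.
    by rewrite oddM andbT; apply/orP; right; apply/eqP; lia.
  + by apply/orP; left; apply/eqP; lia.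
- have u_split := odd_double_half u; rewrite /Gedge0.
  case/orP => [/eqP v_eq | /andP [/eqP v_eq u_even]]; subst v.
  + case u_odd: (odd u) u_split => /= u_split.
    * have [half0 | half_gt0] := posnP u./2; first by rewrite -u_split half0 eqxx.
      apply/or4P; apply: Or44; apply/existsP; exists (inord u./2.+1).
      by rewrite inordK; [apply/and3P; split; apply/eqP; lia | lia].
    * apply/or4P; apply: Or42; apply/existsP; exists (inord u./2).
      by rewrite inordK; [apply/and3P; split; apply/eqP; lia | lia].
  + rewrite (negbTE u_even) /= in u_split.
    apply/or4P; apply: Or43; apply/existsP; exists (inord u./2.+1).
    by rewrite inordK; [apply/and3P; split; apply/eqP; lia | lia].
Qed.

Section Graph.
Variable r : nat.
Local Notation n := (2 * r + 1)%N.

Lemma GadjE (i j : 'I_n) :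
  Gadj i j = [|| (j == i.+1 :> nat), ((j == i.+2 :> nat) && odd i),
                 (i == j.+1 :> nat) | ((i == j.+2 :> nat) && odd j)].
Proof.
rewrite /Gadj (Gedge0E (ltn0Sn i) (ltn_ord j)) (Gedge0E (ltn0Sn j) (ltn_ord i)).
by rewrite !eqSS !oddS !negbK -!orbA.
Qed.

Lemma Gadj_irr (i : 'I_n) : Gadj i i = false.
Proof.
by apply/negbTE/negP; rewrite GadjE; case/or4P => [|/andP [+ _]||/andP [+ _]] => /eqP; lia.
Qed.

Lemma Gadj_far (a b : 'I_n) : (a + hop a <= b)%N -> ~~ Gadj a b && ~~ Gadj b a.
Proof.
move=> far; have ge2 : (a.+2 <= b)%N by move: far; rewrite /hop; case: (odd a); lia.
have ne2 : odd a -> b != a.+2 :> nat by move=> odd_a; move: far; rewrite /hop odd_a; lia.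
apply/andP; split; apply/negP; rewrite GadjE.
- by case/or4P => [|/andP [/eqP b_eq /ne2]||/andP [+ _]] => /eqP; lia.
- by case/or4P => [|/andP [+ _]||/andP [/eqP b_eq /ne2]] => /eqP; lia.
Qed.

Lemma hardP (C : {set 'I_n}) :
  reflect (forall i j, i \in C -> j \in C -> ~~ Gadj i j) (hard_particle C).
Proof.
apply: (iffP forall_inP) => [h i j hi hj | h i hi].
- exact: (forall_inP (h i hi)).
- by apply/forall_inP => j; exact: h.
Qed.

Definition tail_config (j : nat) (C : {set 'I_n}) : bool :=
  hard_particle C && [forall i in C, (j <= i)%N].

Definition tailZ (T : comNzRingType) (w : nat -> T) (j : nat) : T :=
  \sum_(C | tail_config j C) \prod_(i in C) w i.

Lemma tailZ_end (T : comNzRingType) (w : nat -> T) j : (n <= j)%N -> tailZ w j = 1.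
Proof.
move=> n_le_j; rewrite /tailZ (big_pred1 set0) ?big_set0 // => C /=.
apply/andP/eqP => [[_ /forall_inP C_ge] | ->].
- apply/setP => i; rewrite inE; apply/negbTE/negP => /C_ge; have := ltn_ord i; lia.
- by split; [apply/hardP => i j'; rewrite inE | apply/forall_inP => i; rewrite inE].
Qed.

Lemma tailZ_ext (T : comNzRingType) (w w' : nat -> T) j :
  (forall i, (j <= i < n)%N -> w i = w' i) -> tailZ w j = tailZ w' j.
Proof.
move=> ww'; apply: eq_bigr => C /andP [_ /forall_inP C_ge].
by apply: eq_bigr => i /C_ge i_ge; rewrite ww' // i_ge ltn_ord.
Qed.

Lemma ZG_tailZ (T : comNzRingType) (w : nat -> T) : ZG (fun i : 'I_n => w i) = tailZ w 0.
Proof. by apply: eq_bigl => C; rewrite /tail_config andb_idr // => _; apply/forall_inP. Qed.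

Section TailRecursion.
Variables (j : nat) (lt_j_n : (j < n)%N).
Local Notation J := (Ordinal lt_j_n).

Lemma tail_config_notin (C : {set 'I_n}) :
  tail_config j C && (J \notin C) = tail_config j.+1 C.
Proof.
rewrite /tail_config -andbA; congr (_ && _); apply/andP/forall_inP.
- case=> /forall_inP C_ge J_notin i i_in; rewrite ltn_neqAle C_ge // andbT.
  by apply: contraNneq J_notin => j_eq; have -> : J = i by apply: val_inj.
- move=> C_gt; split; first by apply/forall_inP => i /C_gt /ltnW.
  by apply/negP => /C_gt; rewrite ltnn.
Qed.

Lemma tail_config_insert (C : {set 'I_n}) :
  tail_config j (J |: C) && ((J |: C) :\ J == C) = tail_config (j + hop j)%N C.
Proof.
rewrite /tail_config; apply/andP/andP.
- case=> [/andP [/hardP hard_JC /forall_inP JC_ge] /eqP JC_K].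
  have J_notin : J \notin C by rewrite -JC_K setD11.
  split; first by apply/hardP => a b a_in b_in; apply: hard_JC; rewrite inE ?a_in ?b_in orbT.
  apply/forall_inP => i i_in; have i_in' : i \in J |: C by rewrite inE i_in orbT.
  have i_ne : i != J by apply: contraNneq J_notin => <-.
  have /hard_JC /(_ i_in') := setU11 J C; have := JC_ge i i_in'.
  move: i_ne; rewrite -(inj_eq val_inj) GadjE /hop /=.
  by case: (odd j); rewrite ?andbT ?andbF ?orbF => /eqP i_ne i_ge /norP [/eqP ? /eqP ?]; lia.
- case=> /hardP hard_C /forall_inP C_ge.
  have J_notin : J \notin C by apply/negP => /C_ge; rewrite /hop /=; case: (odd j); lia.
  split; last by rewrite setU1K.
  apply/andP; split; last by apply/forall_inP => i; rewrite !inE => /orP [/eqP -> // | /C_ge]; lia.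
  apply/hardP => a b; rewrite !inE => /orP [/eqP -> | a_in] /orP [/eqP -> | b_in].
  + by rewrite Gadj_irr.
  + by case/andP: (@Gadj_far J b (C_ge b b_in)).
  + by case/andP: (@Gadj_far J a (C_ge a a_in)).
  + exact: hard_C.
Qed.

(* Transfer recursion: either the vertex j is empty, or it is occupied and its
   neighbours above it are empty. *)
Lemma tailZ_rec (T : comNzRingType) (w : nat -> T) :
  tailZ w j = tailZ w j.+1 + w j * tailZ w (j + hop j)%N.
Proof.
rewrite /tailZ [LHS](bigID (fun C : {set 'I_n} => J \in C)) /= addrC; congr (_ + _).
  by apply: eq_bigl => C; rewrite tail_config_notin.
rewrite (reindex_onto (fun C => J |: C) (fun C => C :\ J)) /=; last first.
  by move=> C /andP [_ J_in]; exact: setD1K.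
rewrite big_distrr /=; apply: eq_big => C; first by rewrite setU11 andbT tail_config_insert.
case/andP=> _ /eqP JC_K; have J_notin : J \notin C by rewrite -JC_K setD11.
by rewrite big_setU1.
Qed.

End TailRecursion.

Lemma tailZ_rec_all (T : comNzRingType) (w : nat -> T) :
  (forall i, (n <= i)%N -> w i = 0) ->
  forall j, tailZ w j = tailZ w j.+1 + w j * tailZ w (j + hop j)%N.
Proof.
move=> w_out j; have [lt_j_n | n_le_j] := ltnP j n; first exact: tailZ_rec.
by rewrite w_out // mul0r addr0 !tailZ_end //; lia.
Qed.

End Graph.

Definition prev_odd (R : zmodType) (f : nat -> R) (k : nat) : R :=
  if k is k'.+1 then f k'.*2.+1 else 0.

Lemma prev_odd0 (R : zmodType) (f : nat -> R) : prev_odd f 0 = 0.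
Proof. by []. Qed.

Lemma prev_oddS (R : zmodType) (f : nat -> R) k : prev_odd f k.+1 = f k.*2.+1.
Proof. by []. Qed.

Lemma prev_odd_gt0 (R : zmodType) (f : nat -> R) k : (0 < k)%N -> prev_odd f k = f k.-1.*2.+1.
Proof. by case: k. Qed.

Section TransferComparison.
Variable R : comNzRingType.
Variables (q q' z z' : nat -> R) (M : nat).
Hypothesis q_rec : forall j, q j = q j.+1 + z j * q (j + hop j)%N.
Hypothesis q'_rec : forall j, q' j = q' j.+1 + z' j * q' (j + hop j)%N.
Hypothesis q_end : forall j, (M <= j)%N -> [/\ q j = 1, q' j = 1, z j = 0 & z' j = 0].
Hypothesis sum_rule : forall k, z k.*2 + z k.*2.+1 = prev_odd z' k + z' k.*2.
Hypothesis prod_rule : forall k,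
  z k.*2 * (z' k.*2.+1 + z' k.*2.+2) = (prev_odd z' k + z' k.*2) * z' k.*2.+2.

Let rec_even (f g : nat -> R) (f_rec : forall j, f j = f j.+1 + g j * f (j + hop j)%N) k :
  f k.*2 = f k.*2.+1 + g k.*2 * f k.*2.+2.
Proof. by rewrite f_rec /hop odd_double /= addn2. Qed.

Let rec_odd (f g : nat -> R) (f_rec : forall j, f j = f j.+1 + g j * f (j + hop j)%N) k :
  f k.*2.+1 = f k.*2.+2 + g k.*2.+1 * f k.*2.+4.
Proof. by rewrite f_rec /hop oddS odd_double /= addn3. Qed.

Definition comparison (k : nat) : Prop :=
  q k.*2 = q' k.*2.+1 + (prev_odd z' k + z' k.*2) * q' k.*2.+2.

Lemma comparison_shift k : comparison k.+1 -> q k.*2.+2 = q' k.*2.+1.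
Proof.
rewrite /comparison doubleS /= => ->.
by rewrite (rec_odd q'_rec) -doubleS (rec_even q'_rec) doubleS; ring.
Qed.

Lemma comparison_end k : (M <= k)%N -> comparison k.
Proof.
move=> M_le_k; rewrite /comparison; have q_one j : (M <= j)%N -> q j = 1 by case/q_end.
have q'_one j : (M <= j)%N -> q' j = 1 by case/q_end.
have z'_zero j : (M <= j)%N -> z' j = 0 by case/q_end.
have -> : prev_odd z' k = 0 by case: k M_le_k => [|k] M_le_k //=; apply: z'_zero; lia.
rewrite q_one ?q'_one ?z'_zero; try lia.
by rewrite add0r mul0r addr0.
Qed.

Lemma comparison_step k : comparison k.+1 -> comparison k.+2 -> comparison k.
Proof.
move=> /comparison_shift q_2k2 /comparison_shift; rewrite doubleS => q_2k4.
rewrite /comparison (rec_even q_rec) (rec_odd q_rec) q_2k2 q_2k4.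
rewrite (rec_odd q'_rec) -doubleS (rec_even q'_rec) doubleS.
set S := prev_odd z' k + z' k.*2.
have -> : z k.*2.+1 = S - z k.*2 by rewrite /S -sum_rule; ring.
transitivity (q' k.*2.+3 + z' k.*2.+2 * q' k.*2.+4 + z' k.*2.+1 * q' k.*2.+4 +
  S * q' k.*2.+3 + z k.*2 * (z' k.*2.+1 + z' k.*2.+2) * q' k.*2.+4); first by ring.
by rewrite prod_rule -/S; ring.
Qed.

Lemma comparison_all k : comparison k.
Proof.
suff both d : forall k, (M <= k + d)%N -> comparison k /\ comparison k.+1.
  by case: (both M k (leq_addl _ _)).
elim: d => [|d IH] {}k le_M.
- by split; apply: comparison_end; lia.
- have [c1 c2] : comparison k.+1 /\ comparison k.+2 by apply: IH; lia.
  by split => //; apply: comparison_step.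
Qed.

Lemma transfer_comparison : q 0 = q' 0 /\ q 2 = q' 1.
Proof.
split; last by have := comparison_shift (comparison_all 1).
have := comparison_all 0; rewrite /comparison /= add0r => ->.
by rewrite (q'_rec 0) /hop /= add0n.
Qed.

End TransferComparison.

Section Mutation.
Variables (F : fieldType) (r : nat).

(* A seed (A, B) stands for two consecutive rows R_{.,n}, R_{.,n+1}. *)
Definition seed := ((nat -> F) * (nat -> F))%type.

Definition mutate (s : seed) : seed :=
  (s.2, fun a => if (1 <= a <= r)%N then (s.2 a ^+ 2 + s.2 a.+1 * s.2 a.-1) / s.1 a else 1).

Definition yseed (s : seed) (i : nat) : F :=
  if ~~ odd i then
    let a := (i./2).+1 in s.1 a.-1 * s.2 a / (s.1 a * s.2 a.-1)
  else
    let a := (i./2).+1 in s.1 a.-1 * s.2 a.+1 / (s.1 a * s.2 a).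

Definition yG (s : seed) (i : nat) : F := if (i < 2 * r + 1)%N then yseed s i else 0.

Lemma yG_in s i : (i < 2 * r + 1)%N -> yG s i = yseed s i.
Proof. by move=> i_lt; rewrite /yG i_lt. Qed.

Lemma yG_out s i : (2 * r + 1 <= i)%N -> yG s i = 0.
Proof. by move=> i_ge; rewrite /yG ltnNge i_ge. Qed.

Lemma yseed_even s k : yseed s k.*2 = s.1 k * s.2 k.+1 / (s.1 k.+1 * s.2 k).
Proof. by rewrite /yseed odd_double /= half_double. Qed.

Lemma yseed_odd s k : yseed s k.*2.+1 = s.1 k * s.2 k.+2 / (s.1 k.+1 * s.2 k.+1).
Proof. by rewrite /yseed /= odd_double /= uphalf_double. Qed.

Lemma mutate_fst s : (mutate s).1 = s.2.
Proof. by []. Qed.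

Lemma mutate_in s a : (1 <= a <= r)%N ->
  (mutate s).2 a = (s.2 a ^+ 2 + s.2 a.+1 * s.2 a.-1) / s.1 a.
Proof. by move=> a_in; rewrite /mutate /= a_in. Qed.

Lemma mutate_out s a : ~~ (1 <= a <= r)%N -> (mutate s).2 a = 1.
Proof. by move=> a_out; rewrite /mutate /= (negbTE a_out). Qed.

Definition regular (s : seed) : Prop :=
  [/\ forall a, s.1 a != 0, forall a, s.2 a != 0 &
      forall a, ~~ (1 <= a <= r)%N -> s.1 a = 1 /\ s.2 a = 1].

Section LocalRules.
Hypothesis r_gt0 : (0 < r)%N.
Variable s : seed.
Hypothesis s_reg : regular s.
Hypothesis mutate_neq0 : forall a, (mutate s).2 a != 0.

Let A_neq0 a : s.1 a != 0. Proof. by case: s_reg. Qed.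
Let B_neq0 a : s.2 a != 0. Proof. by case: s_reg. Qed.
Let bnd a : ~~ (1 <= a <= r)%N -> s.1 a = 1 /\ s.2 a = 1.
Proof. by case: s_reg => _ _; apply. Qed.
Let num_neq0 a : (1 <= a <= r)%N -> s.2 a ^+ 2 + s.2 a.+1 * s.2 a.-1 != 0.
Proof.
by move=> a_in; have := mutate_neq0 a; rewrite mutate_in // mulf_eq0 negb_or => /andP [].
Qed.

(* y_{2k} + y_{2k+1} = y'_{2k-1} + y'_{2k}, where y' are the weights after mutation;
   at the ends k = 0 and k = r the missing weights are 0 and the boundary
   values of the seed are 1. *)
Lemma sum_rule_mutate k :
  yG s k.*2 + yG s k.*2.+1 = prev_odd (yG (mutate s)) k + yG (mutate s) k.*2.
Proof.
have [k_lt|k_gt|->] := ltngtP k r.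
- rewrite !yG_in ?yseed_even ?yseed_odd ?mutate_fst; try lia.
  case: k k_lt => [|k] k_lt.
  + have [A0 B0] := bnd (a := 0) isT.
    rewrite prev_odd0 (mutate_out s (a := 0)) // mutate_in /= ?A0 ?B0; last by lia.
    by field; rewrite A_neq0 B_neq0.
  + rewrite prev_oddS yG_in ?yseed_odd ?mutate_fst ?mutate_in /=; try lia.
    by field; rewrite ?A_neq0 ?B_neq0 ?num_neq0 //; lia.
- case: k k_gt => [//|k] k_gt.
  by rewrite prev_oddS !yG_out ?addr0 //; lia.
- have [A_r1 B_r1] : s.1 r.+1 = 1 /\ s.2 r.+1 = 1 by apply: bnd; lia.
  rewrite prev_odd_gt0 // (yG_out s (i := r.*2.+1)); last by lia.
  rewrite !yG_in ?yseed_even ?yseed_odd ?mutate_fst ?prednK //; try lia.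
  rewrite (mutate_out s (a := r.+1)) ?mutate_in ?A_r1 ?B_r1; try lia.
  have num_r : s.2 r ^+ 2 + s.2 r.-1 != 0.
    by rewrite -[s.2 r.-1]mul1r -B_r1 num_neq0 //; lia.
  by field; rewrite A_neq0 B_neq0 num_r.
Qed.

Lemma prod_rule_mutate k :
  yG s k.*2 * (yG (mutate s) k.*2.+1 + yG (mutate s) k.*2.+2) =
  (prev_odd (yG (mutate s)) k + yG (mutate s) k.*2) * yG (mutate s) k.*2.+2.
Proof.
rewrite -sum_rule_mutate; have [k_lt | r_le_k] := ltnP k r.
- rewrite !yG_in ?yseed_even ?yseed_odd -?doubleS ?yseed_even ?mutate_fst; try lia.
  rewrite (mutate_in s (a := k.+1)) /=; last by lia.
  by field; rewrite ?A_neq0 ?B_neq0 ?num_neq0 //; lia.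
- by rewrite !(yG_out (mutate s)) ?addr0 ?mulr0 //; lia.
Qed.

End LocalRules.
End Mutation.

Fixpoint eval_ones (k : nat) : mpoly k -> rat :=
  match k return mpoly k -> rat with
  | 0 => fun x => x
  | k'.+1 => fun p : {poly mpoly k'} => eval_ones p.[1]
  end.

Lemma eval_onesD k (p q : mpoly k) : eval_ones (p + q) = eval_ones p + eval_ones q.
Proof. by elim: k p q => [|k IH] p q //=; rewrite hornerD IH. Qed.

Lemma eval_onesM k (p q : mpoly k) : eval_ones (p * q) = eval_ones p * eval_ones q.
Proof. by elim: k p q => [|k IH] p q //=; rewrite hornerM IH. Qed.

Lemma eval_ones1 k : eval_ones (1 : mpoly k) = 1.
Proof. by elim: k => [|k IH] //=; rewrite hornerC IH. Qed.

Lemma eval_ones0 k : eval_ones (0 : mpoly k) = 0.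
Proof. by elim: k => [|k IH] //=; rewrite horner0 IH. Qed.

Lemma eval_ones_var k i : (i < k)%N -> eval_ones (mvar k i) = 1.
Proof.
elim: k i => [|k IH] [|i] //= i_lt; first by rewrite hornerX eval_ones1.
by rewrite hornerC IH.
Qed.

Section Specialization.
Variable r : nat.
Local Notation P := (mpoly (2 * r)).
Local Notation tf := (@FracField.tofrac P).

Definition specializes (x : QField r) (v : rat) : Prop :=
  exists p q : P, [/\ eval_ones q != 0, x = tf p / tf q & v = eval_ones p / eval_ones q].

Let tf_neq0 (q : P) : eval_ones q != 0 -> tf q != 0.
Proof.
by move=> q_neq0; rewrite tofrac_eq0; apply: contraNneq q_neq0 => ->; rewrite eval_ones0.
Qed.

Lemma specializesD x x' v v' :
  specializes x v -> specializes x' v' -> specializes (x + x') (v + v').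
Proof.
move=> [p [q [q_neq0 -> ->]]] [p' [q' [q'_neq0 -> ->]]].
exists (p * q' + p' * q), (q * q'); split.
- by rewrite eval_onesM mulf_neq0.
- by rewrite addf_div ?tf_neq0 // tofracD !tofracM.
- by rewrite addf_div // eval_onesD !eval_onesM.
Qed.

Lemma specializesM x x' v v' :
  specializes x v -> specializes x' v' -> specializes (x * x') (v * v').
Proof.
move=> [p [q [q_neq0 -> ->]]] [p' [q' [q'_neq0 -> ->]]].
exists (p * p'), (q * q'); split.
- by rewrite eval_onesM mulf_neq0.
- by rewrite mulf_div !tofracM.
- by rewrite mulf_div !eval_onesM.
Qed.

Lemma specializesV x x' v v' : v' != 0 ->
  specializes x v -> specializes x' v' -> specializes (x / x') (v / v').
Proof.
move=> v'_neq0 [p [q [q_neq0 -> ->]]] [p' [q' [q'_neq0 -> v'_eq]]].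
have p'_neq0 : eval_ones p' != 0 by apply: contraNneq v'_neq0; rewrite v'_eq => ->; rewrite mul0r.
exists (p * q'), (q * p'); split.
- by rewrite eval_onesM mulf_neq0.
- by rewrite invf_div mulf_div !tofracM.
- by rewrite v'_eq invf_div mulf_div !eval_onesM.
Qed.

Lemma specializes1 : specializes 1 1.
Proof. by exists 1, 1; rewrite eval_ones1 tofrac1 !divr1 oner_eq0. Qed.

Lemma specializes_var i : (i < 2 * r)%N -> specializes (tf (mvar (2 * r) i)) 1.
Proof.
move=> i_lt; exists (mvar (2 * r) i), 1.
by rewrite eval_ones1 eval_ones_var // tofrac1 !divr1 oner_eq0.
Qed.

Lemma specializes_neq0 x v : specializes x v -> v != 0 -> x != 0.
Proof.
move=> [p [q [q_neq0 -> ->]]]; apply: contraNneq => /eqP.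
rewrite mulf_eq0 invr_eq0 (negbTE (tf_neq0 q_neq0)) orbF tofrac_eq0 => /eqP ->.
by rewrite eval_ones0 mul0r.
Qed.

End Specialization.

Section QsystemRegular.
Variable r : nat.

Definition positive (x : QField r) : Prop := exists2 v : rat, 0 < v & specializes x v.

Lemma positiveD x x' : positive x -> positive x' -> positive (x + x').
Proof.
move=> [v v_gt0 xv] [v' v'_gt0 xv'].
by exists (v + v'); [rewrite addr_gt0 | apply: specializesD].
Qed.

Lemma positiveM x x' : positive x -> positive x' -> positive (x * x').
Proof.
move=> [v v_gt0 xv] [v' v'_gt0 xv'].
by exists (v * v'); [rewrite mulr_gt0 | apply: specializesM].
Qed.

Lemma positiveV x x' : positive x -> positive x' -> positive (x / x').
Proof.
move=> [v v_gt0 xv] [v' v'_gt0 xv']; exists (v / v'); first by rewrite divr_gt0.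
by apply: specializesV; rewrite ?gt_eqF.
Qed.

Lemma positive_neq0 x : positive x -> x != 0.
Proof. by move=> [v v_gt0 xv]; rewrite (specializes_neq0 xv) // gt_eqF. Qed.

Lemma QpairS n : Qpair r n.+1 = mutate r (Qpair r n).
Proof. by rewrite /=; case: (Qpair r n). Qed.

Lemma Qpair_iter n : Qpair r n = iter n (mutate r) (Qpair r 0).
Proof. by elim: n => [|n IH] //; rewrite QpairS IH. Qed.

(* The Q-system is subtraction free: all its values are positive, hence
   nonzero, and every row is a regular seed. *)
Lemma Qpair_positive n a : positive ((Qpair r n).1 a) /\ positive ((Qpair r n).2 a).
Proof.
have pos1 : positive 1 by exists 1 => //; exact: specializes1.
elim: n a => [|n IH] a.
  rewrite /= /Qinit0 /Qinit1; case: ifP => [/andP [a_ge a_le] | _]; last by [].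
  by split; exists 1 => //; apply: specializes_var; lia.
rewrite QpairS /=; split; first by case: (IH a).
case: ifP => // _; apply: positiveV; last by case: (IH a).
rewrite expr2; apply: positiveD; apply: positiveM;
  by [case: (IH a) | case: (IH a.+1) | case: (IH a.-1)].
Qed.

Lemma Qpair_boundary n a : ~~ (1 <= a <= r)%N -> (Qpair r n).1 a = 1 /\ (Qpair r n).2 a = 1.
Proof.
move=> a_out; elim: n => [|n [_ B_one]]; first by rewrite /= /Qinit0 /Qinit1 (negbTE a_out).
by rewrite QpairS /= (negbTE a_out) B_one.
Qed.

Lemma Qpair_regular n : regular r (Qpair r n).
Proof.
split=> [a | a |]; last exact: Qpair_boundary.
- by apply: positive_neq0; case: (Qpair_positive n a).
- by apply: positive_neq0; case: (Qpair_positive n a).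
Qed.

End QsystemRegular.

Section GeneratingFunction.
Variables (F : fieldType) (r : nat).
Hypothesis r_gt0 : (0 < r)%N.
Local Notation n := (2 * r + 1)%N.

Definition wt (y : F) : {poly F} := - (y%:P * 'X).

Definition weights (s : seed F) (j : nat) : {poly F} := wt (yG r s j).

Definition denom (s : seed F) : {poly F} := ZG (fun i : 'I_n => wt (yseed s i)).
Definition numer (s : seed F) : {poly F} :=
  ZG (fun i : 'I_n => if val i == 0%N then 0 else wt (yseed s i)).

Lemma wt0 : wt 0 = 0.
Proof. by rewrite /wt mul0r oppr0. Qed.

Lemma wtD a b : wt a + wt b = wt (a + b).
Proof. by rewrite /wt polyCD mulrDl opprD. Qed.

Lemma wtM a b : wt a * wt b = (a * b)%:P * 'X ^+ 2.
Proof. by rewrite /wt mulrNN polyCM; ring. Qed.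

Lemma weights_rec s j :
  tailZ r (weights s) j =
  tailZ r (weights s) j.+1 + weights s j * tailZ r (weights s) (j + hop j)%N.
Proof. by apply: tailZ_rec_all => i i_ge; rewrite /weights yG_out // wt0. Qed.

Lemma denom_tailZ s : denom s = tailZ r (weights s) 0.
Proof.
rewrite /denom (ZG_tailZ r (fun j => wt (yseed s j))).
by apply: tailZ_ext => i i_lt; rewrite /weights yG_in.
Qed.

Lemma numer_tailZ s : numer s = tailZ r (weights s) 1.
Proof.
rewrite /numer (ZG_tailZ r (fun j => if j == 0%N then 0 else wt (yseed s j))).
have n_gt0 : (0 < n)%N by lia.
rewrite (tailZ_rec n_gt0) eqxx mul0r addr0.
by apply: tailZ_ext => -[|i] // i_lt; rewrite /weights yG_in.
Qed.

Lemma tailZ_coef0 s j : (tailZ r (weights s) j)`_0 = 1.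
Proof.
elim: {j} (n - j)%N {-2}j (erefl (n - j)%N) => [|d IH] j d_eq.
  by rewrite tailZ_end ?coefC //; lia.
rewrite weights_rec coefD coef0M /weights /wt coefN coefCM coefX mulr0 oppr0 mul0r addr0.
by apply: IH; lia.
Qed.

Lemma prev_odd_weights s k : prev_odd (weights s) k = wt (prev_odd (yG r s) k).
Proof. by case: k => [|k] //=; rewrite wt0. Qed.

Section OneMutation.
Variable s : seed F.
Hypothesis s_reg : regular r s.
Hypothesis mutate_neq0 : forall a, (mutate r s).2 a != 0.

Lemma tailZ_mutate :
  tailZ r (weights s) 0 = tailZ r (weights (mutate r s)) 0 /\
  tailZ r (weights s) 2 = tailZ r (weights (mutate r s)) 1.
Proof.
apply: (@transfer_comparison _ _ _ _ _ n); try exact: weights_rec.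
- move=> j j_ge; rewrite !tailZ_end // /weights !yG_out //.
  by split => //; rewrite wt0.
- by move=> k; rewrite prev_odd_weights /weights !wtD sum_rule_mutate.
- by move=> k; rewrite prev_odd_weights /weights !wtD !wtM prod_rule_mutate.
Qed.

Lemma denom_mutate : denom (mutate r s) = denom s.
Proof. by rewrite !denom_tailZ; case: tailZ_mutate. Qed.

Lemma numer_sub_denom : numer s - denom s = (yseed s 0)%:P * 'X * numer (mutate r s).
Proof.
rewrite !numer_tailZ denom_tailZ (weights_rec s 0) /hop /= add0n.
case: tailZ_mutate => _ <-; rewrite /weights yG_in /wt; [ring | lia].
Qed.

End OneMutation.

Lemma first_row_ratio m s : (forall k, regular r (iter k (mutate r) s)) ->
  (iter m (mutate r) s).1 1 = s.1 1 * fps_ratio (numer s) (denom s) m.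
Proof.
elim: m s => [|m IH] s orbit_reg.
  by rewrite fps_ratio0 numer_tailZ denom_tailZ !tailZ_coef0 divr1 mulr1.
have s_reg : regular r s := orbit_reg 0; have [_ mutate_neq0 _] := orbit_reg 1.
rewrite iterSr IH; last by move=> k; rewrite -iterSr.
rewrite denom_mutate // (fps_ratio_shift _ _ (numer_sub_denom s_reg mutate_neq0)); last first.
  by rewrite denom_tailZ tailZ_coef0 oner_eq0.
case: s_reg => A_neq0 _ /(_ 0%N isT) [A0 B0].
by rewrite mutate_fst (yseed_even s 0) A0 B0 mul1r mulr1 mulrA [s.1 1 * _]mulrC (divfK (A_neq0 1)).
Qed.

End GeneratingFunction.

Theorem mainTheorem8 (r : nat) (hr : (1 <= r)%N) :
  let y := yw r in
  let Num := ZG (fun i : 'I_(2 * r + 1) =>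
                   if val i == 0%N then 0 else - ((y i)%:P * 'X)) in
  let Den := ZG (fun i : 'I_(2 * r + 1) => - ((y i)%:P * 'X)) in
  forall n : nat,
    Qsys r 1 n =
    fps_scale (Qsys r 1 0)
      (fps_mul (fps_of_poly Num) (fps_inv (fps_of_poly Den))) n.
Proof.
move=> y Num Den m.
have orbit_reg k : regular r (iter k (mutate r) (Qpair r 0)).
  by rewrite -Qpair_iter; exact: Qpair_regular.
by rewrite /Qsys Qpair_iter (first_row_ratio hr m orbit_reg).
Qed.
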